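(* For any positive integer $n$ and any pair of non-negative integers $s,t$ with $s \geq t$, \[ \sum_{j=0}^{n} \frac{1}{\binom{n+s}{j+t}} \binom{n}{j} \;=\; \frac{s+1+n}{(s+1)\binom{s}{t}} . \] *)

From mathcomp Require Import all_boot all_order all_algebra.

(** Pascal's rule turns the sum for [n.+1] into the sums for [(n, s.+1, t)] and
    [(n, s.+1, t.+1)], so by induction on [n] everything reduces to the
    reciprocal Pascal identity
    [1 / C(s+1, t) + 1 / C(s+1, t+1) = (s+2) / ((s+1) C(s, t))],
    which follows from [C(s+1, t) = (s+1) C(s, t) / (s+1-t)] and
    [C(s+1, t+1) = (s+1) C(s, t) / (t+1)]. *)

From mathcomp Require Import all_boot all_order all_algebra.
Import GRing.Theory Num.Theory.
Local Open Scope ring_scope.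

Lemma sum_mul_binS (R : pzSemiRingType) (f : nat -> R) n :
  \sum_(0 <= j < n.+2) f j * 'C(n.+1, j)%:R
  = \sum_(0 <= j < n.+1) (f j + f j.+1) * 'C(n, j)%:R.
Proof.
rewrite big_nat_recl // bin0 mulr1.
under eq_bigr do rewrite binS natrD mulrDr.
rewrite big_split /=.
under [in RHS]eq_bigr do rewrite mulrDl.
rewrite big_split /= addrA; congr (_ + _).
rewrite [RHS]big_nat_recl // [in LHS]big_nat_recr //= bin0 mulr1 bin_small //.
by rewrite mulr0 addr0.
Qed.

Section ReciprocalPascal.

Variable R : numFieldType.

Lemma invr_natM (a b : nat) : (a != 0)%N ->
  (b%:R : R)^-1 = a%:R / (a * b)%:R.
Proof. by move=> a0; rewrite natrM invfM mulrA mulfV ?mul1r // pnatr_eq0. Qed.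

Lemma invr_binS (s t : nat) : (t <= s)%N ->
  ('C(s.+1, t)%:R : R)^-1 = (s.+1 - t)%:R / (s.+1 * 'C(s, t))%:R.
Proof.
by move=> le_ts; rewrite (mul_bin_down s.+1 t) -invr_natM // -lt0n subn_gt0.
Qed.

Lemma invr_binSS (s t : nat) :
  ('C(s.+1, t.+1)%:R : R)^-1 = t.+1%:R / (s.+1 * 'C(s, t))%:R.
Proof. by rewrite (mul_bin_diag s.+1 t) -invr_natM. Qed.

Lemma invr_bin_pascal (s t : nat) : (t <= s)%N ->
  ('C(s.+1, t)%:R : R)^-1 + ('C(s.+1, t.+1)%:R)^-1
  = s.+2%:R / (s.+1 * 'C(s, t))%:R.
Proof.
move=> le_ts; rewrite invr_binS // invr_binSS -mulrDl -natrD.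
by rewrite addnS subnK // ltnW.
Qed.

Lemma sum_invr_bin_mul_bin (n s t : nat) : (t <= s)%N ->
  \sum_(0 <= j < n.+1) ('C(n + s, j + t)%:R : R)^-1 * 'C(n, j)%:R
  = (s + 1 + n)%:R / ((s + 1)%:R * 'C(s, t)%:R).
Proof.
elim: n s t => [|n IHn] s t le_ts.
  by rewrite big_nat1 bin0 mulr1 addn0 invfM mulrA mulfV ?mul1r // pnatr_eq0 addn1.
rewrite sum_mul_binS.
under eq_bigr do rewrite !addSnnS mulrDl.
rewrite big_split /= !IHn // ?leqW //.
rewrite !invfM !mulrA -mulrDr invr_bin_pascal // natrM invfM !addn1 addnS -addSn.
by rewrite -mulrA mulKf ?mulrA ?pnatr_eq0.
Qed.

End ReciprocalPascal.

(* The identity also holds for [n = 0]. *)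
Theorem lemma1 (n s t : nat) (hn : (0 < n)%N) (hst : (t <= s)%N) :
  \sum_(0 <= j < n.+1) ('C(n + s, j + t)%:R : rat)^-1 * ('C(n, j))%:R
  = ((s + 1 + n)%:R : rat) / ((s + 1)%:R * ('C(s, t))%:R).
Proof. exact: sum_invr_bin_mul_bin. Qed.
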